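(* If an nfc-transducer $\mathcal{T}=(Q,V,\Delta,q_0)$ is consistent with a BPA system $\mathcal{G}=(V,\mathit{Act},\mathcal{R})$, then $\alpha\approx_{q_0}\mathcal{T}_{q_0}(\alpha)$ for every $\alpha\in V^*$.
   Context: A BPA system $\mathcal{G}=(V,\mathit{Act},\mathcal{R})$: finite variables $V$, finite actions $\mathit{Act}$ (possibly containing silent $\tau$), rules $A\xrightarrow{a}\alpha$; LTS $\mathcal{L}_\mathcal{G}$ on $V^*$ with $A\beta\xrightarrow{a}\alpha\beta$ for rules $A\xrightarrow{a}\alpha$. Transducer $\mathcal{T}=(Q,V,\Delta,q_0)$ reading right to left, $q'\xleftarrow{A/\gamma}q$ meaning $\Delta(q,A)=(q',\gamma)$, extended to strings by $q\xleftarrow{\varepsilon/\varepsilon}q$ and composition; $\mathcal{T}_q(\alpha)$ is the output from $q$ on $\alpha$. $q$-normal form: $\varepsilon$ or $A_k\cdots A_1$ with $q_k\xleftarrow{A_k/A_k}\cdots q_1\xleftarrow{A_1/A_1}q$. nfc-transducer: each $\mathcal{T}_q(A)$ is a $q$-normal form and $q'\xleftarrow{A/\gamma}q$ implies $q'\xleftarrow{\gamma/\gamma}q$. Long moves $\alpha\overset{a}{\Rightarrow}_q\beta$: either $a=\tau$ and $\beta=\mathcal{T}_q(\alpha)$, or $\alpha=\alpha_0\xrightarrow{\tau}\cdots\xrightarrow{\tau}\alpha_k\xrightarrow{a}\beta'$ in $\mathcal{L}_\mathcal{G}$ with $\mathcal{T}_q(\alpha_0)=\cdots=\mathcal{T}_q(\alpha_k)$,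 $\mathcal{T}_q(\beta')=\beta$. $\alpha_1\approx_q\alpha_2$ iff they have the same sets of long-move results for each action. Consistency: (1) $A\approx_{q_0}\varepsilon$ if $\mathcal{T}_{q_0}(A)=\varepsilon$; (2) $A\approx_q\mathcal{T}_q(A)$ if $\mathcal{T}_q(A)\ne\varepsilon$; (3) $AC\approx_qC$ if $\mathcal{T}_q(AC)=\mathcal{T}_q(C)=C$. *)

From mathcomp Require Import all_boot.
Set Implicit Arguments. Unset Strict Implicit. Unset Printing Implicit Defensive.

Section BPA.
Variables (V Act Q : finType).
(* tau = Some t : the action t is the silent action; tau = None : no silent action *)
Variable tau : option Act.
(* the (finite) set of rules A --a--> alpha *)
Variable R : seq (V * Act * seq V).
(* transducer transition function: delta q A = (q', gamma) means q' <-A/gamma- q *)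
Variable delta : Q -> V -> Q * seq V.

Definition bpa_step (x : seq V) (a : Act) (y : seq V) : Prop :=
  exists A alpha beta, x = A :: beta /\ (A, a, alpha) \in R /\ y = alpha ++ beta.

Definition tau_step (x y : seq V) : Prop :=
  exists t, tau = Some t /\ bpa_step x t y.

(* The transducer reads right to left: words are lists whose head is the
   leftmost letter, so the last letter is read first. *)
Fixpoint trun (q : Q) (x : seq V) : Q * seq V :=
  match x with
  | [::] => (q, [::])
  | A :: x' => let (q1, g1) := trun q x' in
               let (q2, g2) := delta q1 A in (q2, g2 ++ g1)
  end.

Definition tout (q : Q) (x : seq V) : seq V := (trun q x).2.

Fixpoint normal_form (q : Q) (x : seq V) : bool :=
  match x with
  | [::] => true
  | A :: x' => normal_form q x' && ((delta (trun q x').1 A).2 == [:: A])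
  end.

Definition nfc : Prop :=
  (forall q A, normal_form q (tout q [:: A])) /\
  (forall q A, trun q (delta q A).2 = delta q A).

Inductive tau_path (q : Q) : seq V -> seq V -> Prop :=
| tau_path_refl x : tau_path q x x
| tau_path_cons x y z : tau_step x y -> tout q y = tout q x ->
                        tau_path q y z -> tau_path q x z.

Definition is_tau (a : Act) : Prop := tau = Some a.

Definition long_move (q : Q) (x : seq V) (a : Act) (y : seq V) : Prop :=
  (is_tau a /\ y = tout q x) \/
  (exists xk y', tau_path q x xk /\ bpa_step xk a y' /\ tout q y' = y).

Definition tequiv (q : Q) (x1 x2 : seq V) : Prop :=
  forall a y, long_move q x1 a y <-> long_move q x2 a y.

Definition consistent (q0 : Q) : Prop :=
  [/\ (forall A, tout q0 [:: A] = [::] -> tequiv q0 [:: A] [::]),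
      (forall q A, tout q [:: A] <> [::] -> tequiv q [:: A] (tout q [:: A]))
    & (forall q A C, tout q [:: A; C] = [:: C] -> tout q [:: C] = [:: C] ->
                     tequiv q [:: A; C] [:: C])].

End BPA.

From Pilot Require Import Defs.
From mathcomp Require Import all_boot.

Set Implicit Arguments.
Unset Strict Implicit.
Unset Printing Implicit Defensive.

(* The transducer is read right to left, so everything to the left of a word x
   sees only the state and output reached on x.  If the
   output of the left part is nonempty, no output-preserving tau-path can reach
   the suffix, so equivalence of left parts lifts to the whole word.  If two
   suffixes have the same run and are equivalent, a long move from x b either
   stays inside x (and can be replayed on x b') or empties x first and then
   continues as a long move from b.  By induction on alpha = A b, replace b by its
   normal form N = T(b); then A N is equivalent to T(A N) by one of the three
   consistency conditions, according to whether A is erased and N is empty. *)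

Section TransducerEquivalence.
Variables (V Act Q : finType) (tau : option Act) (R : seq (V * Act * seq V))
  (delta : Q -> V -> Q * seq V).

Local Notation trun := (trun delta).
Local Notation tout := (tout delta).
Local Notation normal_form := (normal_form delta).
Local Notation bpa_step := (bpa_step R).
Local Notation tau_path := (tau_path tau R delta).
Local Notation long_move := (long_move tau R delta).
Local Notation tequiv := (tequiv tau R delta).

Lemma trun_cons q A x : trun q (A :: x) =
  ((delta (trun q x).1 A).1, (delta (trun q x).1 A).2 ++ (trun q x).2).
Proof. by rewrite /=; case: (trun q x) => q1 g1 /=; case: (delta q1 A). Qed.

Lemma trun_cat q x y : trun q (x ++ y) =
  ((trun (trun q y).1 x).1, (trun (trun q y).1 x).2 ++ (trun q y).2).
Proof.
elim: x => [|A x IHx]; first by rewrite /=; case: (trun q y).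
by rewrite cat_cons !trun_cons IHx /= catA.
Qed.

Lemma tout_cat q x y : tout q (x ++ y) = tout (trun q y).1 x ++ tout q y.
Proof. by rewrite /Defs.tout trun_cat. Qed.

Lemma tout_seq1 q A : tout q [:: A] = (delta q A).2.
Proof. by rewrite /Defs.tout trun_cons /= cats0. Qed.

Lemma tout_cat_run q x b b' : trun q b = trun q b' ->
  tout q (x ++ b) = tout q (x ++ b').
Proof. by move=> Eb; rewrite !tout_cat Eb /Defs.tout Eb. Qed.

Lemma normal_form_cat q x y :
  normal_form q (x ++ y) = normal_form q y && normal_form (trun q y).1 x.
Proof.
elim: x => [|A x IHx] /=; first by rewrite andbT.
by rewrite IHx trun_cat andbA.
Qed.

Lemma tout_normal q x : normal_form q x -> tout q x = x.
Proof.
elim: x => [//|A x IHx] /= /andP[/IHx nf_x /eqP copyA].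
by rewrite /Defs.tout trun_cons copyA /= -/(Defs.tout delta q x) nf_x.
Qed.

Lemma trun_tout q x : nfc delta -> trun q (tout q x) = trun q x.
Proof.
case=> _ idem; elim: x => [//|A x IHx].
by rewrite /Defs.tout trun_cons trun_cat -/(Defs.tout delta q x) IHx idem.
Qed.

Lemma normal_form_tout q x : nfc delta -> normal_form q (tout q x).
Proof.
move=> nfcT; elim: x => [//|A x IHx].
rewrite /Defs.tout trun_cons normal_form_cat -/(Defs.tout delta q x).
by rewrite IHx trun_tout //= -tout_seq1; case: nfcT.
Qed.

Lemma catIs (x y b : seq V) : x ++ b = y ++ b -> x = y.
Proof.
move=> /(congr1 rev); rewrite !rev_cat => /eqP; rewrite eqseq_cat // => /andP[_ /eqP].
exact: (can_inj revK).
Qed.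

Lemma bpa_step_catr x a y b : bpa_step x a y -> bpa_step (x ++ b) a (y ++ b).
Proof. by move=> [A [al [be [-> [rule ->]]]]]; exists A, al, (be ++ b); rewrite catA. Qed.

Lemma bpa_step_catr_inv x a y b : x != [::] -> bpa_step (x ++ b) a y ->
  exists2 y0, y = y0 ++ b & bpa_step x a y0.
Proof.
case: x => // B x _ [A [al [be [[<- <-] [rule ->]]]]].
by exists (al ++ x); [rewrite catA | exists B, al, x].
Qed.

Lemma tau_path_tout q x z : tau_path q x z -> tout q z = tout q x.
Proof. by elim=> // x1 y1 z1 _ E _ ->. Qed.

Lemma tau_path_trans q x y z : tau_path q x y -> tau_path q y z -> tau_path q x z.
Proof. by elim=> // x1 y1 z1 step E _ IH /IH; apply: tau_path_cons step E. Qed.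

Lemma tau_path_catr q b x z :
  tau_path (trun q b).1 x z -> tau_path q (x ++ b) (z ++ b).
Proof.
elim=> [w|w w' w'' [t [Ht step]] E _ IH]; first exact: tau_path_refl.
apply: tau_path_cons IH; first by exists t; split; last exact: bpa_step_catr.
by rewrite !tout_cat E.
Qed.

(* Every word on the path keeps the nonempty output of the left part, so the
   path never touches b. *)
Lemma tau_path_catr_inv q b x z : tout (trun q b).1 x != [::] ->
  tau_path q (x ++ b) z ->
  exists z0, [/\ z = z0 ++ b, tau_path (trun q b).1 x z0 &
                 tout (trun q b).1 z0 = tout (trun q b).1 x].
Proof.
move=> out_x path; remember (x ++ b) as xb eqn:Exb.
elim: path x Exb out_x => [w|w y w' [t [Ht step]] E _ IH] x Ew out_x.
  by exists x; split; rewrite ?Ew //; apply: tau_path_refl.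
have x_ne : x != [::] by apply: contraNneq out_x => ->.
rewrite Ew in step; have [y0 Ey step0] := bpa_step_catr_inv x_ne step.
have E0 : tout (trun q b).1 y0 = tout (trun q b).1 x.
  by move: E; rewrite Ey Ew !tout_cat => /catIs.
have [|z0 [Ez path0 Ez0]] := IH y0 Ey; first by rewrite E0.
exists z0; split; rewrite ?Ez0 //.
by apply: tau_path_cons path0 => //; exists t.
Qed.

Lemma long_move_catr q b x a y : tout (trun q b).1 x != [::] ->
  long_move q (x ++ b) a y <->
  exists2 y0, long_move (trun q b).1 x a y0 & y = y0 ++ tout q b.
Proof.
move=> out_x; split.
  case=> [[Ha ->]|[xk [y' [path [step <-]]]]].
    by exists (tout (trun q b).1 x); [left | rewrite tout_cat].
  have [z0 [Exk path0 Ez0]] := tau_path_catr_inv out_x path.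
  have z0_ne : z0 != [::] by apply: contraNneq out_x => E; rewrite -Ez0 E.
  rewrite Exk in step; have [y0 -> step0] := bpa_step_catr_inv z0_ne step.
  by exists (tout (trun q b).1 y0); [right; exists z0, y0 | rewrite tout_cat].
case=> y0 [[Ha ->]|[xk [y' [path [step <-]]]]] ->.
  by left; rewrite tout_cat.
right; exists (xk ++ b), (y' ++ b); rewrite tout_cat.
by split; [apply: tau_path_catr | split; first exact: bpa_step_catr].
Qed.

Lemma tequiv_catr q b x x' : tequiv (trun q b).1 x x' ->
  tout (trun q b).1 x != [::] -> tout (trun q b).1 x' != [::] ->
  tequiv q (x ++ b) (x' ++ b).
Proof.
move=> eqx out_x out_x' a y.
have [to_x of_x] := long_move_catr a y out_x.
have [to_x' of_x'] := long_move_catr a y out_x'.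
by split=> [/to_x [y0 /eqx m0 Ey] | /to_x' [y0 /eqx m0 Ey]];
  [apply: of_x' | apply: of_x]; exists y0.
Qed.

(* Either the path stays to the left of b, or it first erases the left part
   completely; since b and b' have the same run, the output-preservation
   conditions are the same on both sides. *)
Lemma tau_path_catl_split q b b' x z : trun q b = trun q b' ->
  tau_path q (x ++ b) z ->
  (exists2 z0, z = z0 ++ b & tau_path q (x ++ b') (z0 ++ b')) \/
  (tau_path q (x ++ b') b' /\ tau_path q b z).
Proof.
move=> Eb path; remember (x ++ b) as xb eqn:Exb.
have tout_b u := tout_cat_run u Eb.
elim: path x Exb => [w|w y w' step E path IH] [|B x] /= Ew.
- by left; exists [::]; last exact: tau_path_refl.
- by left; exists (B :: x); last exact: tau_path_refl.
- by right; split; [apply: tau_path_refl | rewrite -Ew; apply: tau_path_cons path].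
case: (step) => t [Ht [A [al [be [Ew2 [rule Ey]]]]]].
move: Ew2 rule; rewrite Ew => -[<- Eb2] rule.
have Ey' : y = (al ++ x) ++ b by rewrite Ey -Eb2 catA.
have step' : tau_step tau R ((B :: x) ++ b') ((al ++ x) ++ b').
  by exists t; split => //; exists B, al, (x ++ b'); rewrite catA.
have E' : tout q ((al ++ x) ++ b') = tout q ((B :: x) ++ b').
  by rewrite -!tout_b -Ey' E Ew.
case: (IH _ Ey') => [[z0 Ez path0]|[path1 path2]].
  by left; exists z0 => //; apply: tau_path_cons path0.
by right; split => //; apply: tau_path_cons path1.
Qed.

Lemma long_move_catl q b b' x a y : trun q b = trun q b' -> tequiv q b b' ->
  long_move q (x ++ b) a y -> long_move q (x ++ b') a y.
Proof.
move=> Eb eqb.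
have tout_b u := tout_cat_run u Eb.
have through_b' w : tau_path q (x ++ b') b' -> long_move q b a w ->
    long_move q (x ++ b') a w.
  move=> path /eqb [[Ha ->]|[xk [y' [path' [step <-]]]]].
    by left; rewrite (tau_path_tout path).
  by right; exists xk, y'; split; first exact: tau_path_trans path path'.
case=> [[Ha ->]|[xk [y' [path [step <-]]]]]; first by left; rewrite tout_b.
case: (tau_path_catl_split Eb path) => [[[|B z0] Ez path0]|[path1 path2]].
- apply: through_b' path0 _; right; exists b, y'; rewrite Ez in step.
  by split; first exact: tau_path_refl.
- rewrite Ez in step.
  have [y0 -> step0] := bpa_step_catr_inv (isT : B :: z0 != [::]) step.
  right; exists ((B :: z0) ++ b'), (y0 ++ b'); rewrite tout_b.
  by split=> //; split; first exact: bpa_step_catr.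
- by apply: through_b' path1 _; right; exists xk, y'.
Qed.

Lemma tequiv_refl q x : tequiv q x x.
Proof. by []. Qed.

Lemma tequiv_sym q x y : tequiv q x y -> tequiv q y x.
Proof. by move=> eqxy a z; split=> /eqxy. Qed.

Lemma tequiv_trans q x y z : tequiv q x y -> tequiv q y z -> tequiv q x z.
Proof. by move=> eqxy eqyz a w; split=> [/eqxy/eqyz | /eqyz/eqxy]. Qed.

Lemma tequiv_catl q b b' x : trun q b = trun q b' -> tequiv q b b' ->
  tequiv q (x ++ b) (x ++ b').
Proof.
move=> Eb eqb a y; split; apply: long_move_catl => //.
exact: tequiv_sym.
Qed.

Lemma tequiv_cons_normal q0 A N : nfc delta -> consistent tau R delta q0 ->
  normal_form q0 N -> tequiv q0 (A :: N) (tout q0 (A :: N)).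
Proof.
move=> [_ idem] [erase0 keep shrink] nfN.
rewrite /Defs.tout trun_cons -/(Defs.tout delta q0 N) (tout_normal nfN).
case EA: (delta (trun q0 N).1 A).2 => [|g1 g] /=; last first.
  set p := (trun q0 N).1 in EA *.
  have out_g : tout p (g1 :: g) = g1 :: g by rewrite -EA /Defs.tout idem.
  have eqA : tequiv p [:: A] (g1 :: g).
    by rewrite -EA -tout_seq1; apply: keep; rewrite tout_seq1 EA.
  by apply: (tequiv_catr eqA); rewrite ?out_g // tout_seq1 EA.
case: N nfN EA => [_ EA | C N' /andP[_ /eqP copyC] EA].
  by apply: erase0; rewrite tout_seq1.
rewrite trun_cons /= in EA; set p' := (trun q0 N').1 in copyC EA.
have out_C : tout p' [:: C] = [:: C] by rewrite tout_seq1.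
have out_AC : tout p' [:: A; C] = [:: C].
  by rewrite -cat1s tout_cat !tout_seq1 trun_cons /= EA copyC.
by apply: (tequiv_catr (shrink _ _ _ out_AC out_C)); rewrite ?out_AC ?out_C.
Qed.

End TransducerEquivalence.

Theorem mainTheorem6 (V Act Q : finType) (tau : option Act)
    (R : seq (V * Act * seq V)) (delta : Q -> V -> Q * seq V) (q0 : Q) :
  nfc delta -> consistent tau R delta q0 ->
  forall alpha : seq V, tequiv tau R delta q0 alpha (tout delta q0 alpha).
Proof.
move=> nfcT consT; elim=> [|A b IH]; first exact: tequiv_refl.
set N := tout delta q0 b in IH.
have run_N : trun delta q0 N = trun delta q0 b by apply: trun_tout.
have -> : tout delta q0 (A :: b) = tout delta q0 (A :: N).
  by rewrite /tout !trun_cons run_N.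
apply: (tequiv_trans (y := A :: N)).
  by apply: (tequiv_catl [:: A] _ IH).
by apply: tequiv_cons_normal => //; apply: normal_form_tout.
Qed.
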